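(* For every $w\in\mathbb{C}$, $$\tau|_{L_w\cap\Omega}\le\hat\omega|_{L_w\cap\Omega}\le 2e^{-\rho_1}\,\tau|_{L_w\cap\Omega},$$ as inequalities of real $(1,1)$-forms on the surface $L_w\cap\Omega$ (away from the zero section, where $e^{-\rho_1}=\infty$).
   Context: Let $E$ be the total space of $\mathcal{O}_{\mathbb{P}^1}(-1)\oplus\mathcal{O}_{\mathbb{P}^1}(-1)\to\mathbb{P}^1$, with zero section $P_0$. On the chart with inhomogeneous coordinate $z$ on $\mathbb{P}^1$ use standard fibre coordinates $(\xi_1,\xi_2)$, and define the (globally defined) functions $e^{\rho}=(1+|z|^2)(|\xi_1|^2+|\xi_2|^2)$ and $e^{\rho_1}=(1+|z|^2)|\xi_1|^2$ (the squared norms of $\xi$ and its first component for the metric $h\oplus h$, $h$ the hermitian metric on $\mathcal{O}(-1)$ with curvature $-\omega_{FS}$). Let $\omega_{FS}=\sqrt{-1}\partial\bar\partial\log(1+|z|^2)$ (pulled back to $E$), $\hat\omega=\omega_{FS}+\sqrt{-1}\partial\bar\partial e^{\rho}$ (a Kähler form on $E$), $\tau=\sqrt{-1}\partial\bar\partial e^{\rho_1}$ (a smooth closed nonnegative $(1,1)$-form), and $\Omega=\{\rho<0\}\subset E$. For $w\in\mathbb{C}$, $L_w\subset E$ is the closure of $\{\xi_2=w\xi_1\}$, a smooth surface containing $P_0$ (isomorphic to $\mathbb{C}^2$ blown up at one point). *)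

From Stdlib Require Import Reals.
From Coquelicot Require Import Coquelicot.
Open Scope R_scope.

Definition nsq (c : C) : R := (Re c) ^ 2 + (Im c) ^ 2.

(* Chart of E over {z in C}: coordinates (z, xi1, xi2).  Potentials: *)
Definition e_rho (z xi1 xi2 : C) : R := (1 + nsq z) * (nsq xi1 + nsq xi2).
Definition e_rho1 (z xi1 xi2 : C) : R := (1 + nsq z) * nsq xi1.
Definition pot_FS (z xi1 xi2 : C) : R := ln (1 + nsq z).
Definition pot_hat (z xi1 xi2 : C) : R := pot_FS z xi1 xi2 + e_rho z xi1 xi2.

(* Restriction (pullback) to L_w = {xi2 = w xi1}, with holomorphic
   coordinates (z, t) on L_w via (z,t) |-> (z, t, w t). *)
Definition restrL (w : C) (f : C -> C -> C -> R) : C -> C -> R :=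
  fun z t => f z t (w * t)%C.

(* Real (1,1)-form i ddbar f of a real function f on C^2, evaluated on the
   pair (V, JV) of a real tangent vector V = (u,v) at (z,t):
   D^2 f[V,V] + D^2 f[JV,JV]  (= 4 sum f_{j kbar} V_j conj V_k). *)
Definition ddc (f : C -> C -> R) (z t u v : C) : R :=
  Derive_n (fun s : R => f (z + RtoC s * u)%C (t + RtoC s * v)%C) 2 0
  + Derive_n (fun s : R => f (z + RtoC s * (Ci * u))%C (t + RtoC s * (Ci * v))%C) 2 0.

(* On [L_w] in the coordinates [(z, t)] one has [e^rho = (1+|w|^2) e^rho1] and
   [e^rho1 = |t|^2 + |z t|^2], a sum of squared moduli of holomorphic functions,
   so [tau(V) = 4 (|v|^2 + |u t + z v|^2)] and [hat omega = omega_FS + (1+|w|^2) tau].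
   The lower bound follows from [1 + |w|^2 >= 1] and [omega_FS >= 0].  For the upper
   bound, [(1+|w|^2) e^rho1 = e^rho < 1] on [Omega] controls the second term, and
   Cauchy-Schwarz in [C^2] applied to [u t = (u t + z v) - z v] gives
   [omega_FS <= e^-rho1 tau]. *)
From Stdlib Require Import Reals Lra Psatz.
From Coquelicot Require Import Coquelicot.
Open Scope R_scope.

Lemma nsq_ge0 (a : C) : 0 <= nsq a.
Proof. unfold nsq; pose proof (pow2_ge_0 (Re a)); pose proof (pow2_ge_0 (Im a)); lra. Qed.

Lemma nsq_pos (a : C) : a <> RtoC 0 -> 0 < nsq a.
Proof.
  destruct a as [a1 a2]; unfold nsq; simpl; intros Ha.
  destruct (Rle_lt_dec (a1 ^ 2 + a2 ^ 2) 0) as [Hle | Hlt]; [exfalso | exact Hlt].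
  apply Ha; unfold RtoC; f_equal; nra.
Qed.

Lemma nsq_mul (a b : C) : nsq (a * b)%C = nsq a * nsq b.
Proof. destruct a as [a1 a2], b as [b1 b2]; unfold nsq; simpl; ring. Qed.

Lemma nsq_add_mul_le (a b x y : C) :
  nsq (a * x + b * y)%C <= (nsq a + nsq b) * (nsq x + nsq y).
Proof.
  destruct a as [a1 a2], b as [b1 b2], x as [x1 x2], y as [y1 y2]; unfold nsq; simpl.
  (* Lagrange's identity: the defect is [|a conj y - b conj x|^2]. *)
  pose proof (pow2_ge_0 (a1 * y1 + a2 * y2 - b1 * x1 - b2 * x2)).
  pose proof (pow2_ge_0 (a2 * y1 - a1 * y2 - b2 * x1 + b1 * x2)).
  nra.
Qed.

Lemma Derive_n_2_of_is_derive (f f1 f2 : R -> R) (x : R) :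
  (forall s, is_derive f s (f1 s)) -> (forall s, is_derive f1 s (f2 s)) ->
  Derive_n f 2 x = f2 x.
Proof.
  intros Hf Hf1; simpl.
  rewrite (Derive_ext _ f1); [now apply is_derive_unique |].
  intros s; now apply is_derive_unique.
Qed.

Section SecondDerivativesAlongLine.

Variables z1 z2 t1 t2 u1 u2 v1 v2 K : R.

Definition base_sq (s : R) : R := 1 + (z1 + s * u1) ^ 2 + (z2 + s * u2) ^ 2.
Definition fibre_sq (s : R) : R := (t1 + s * v1) ^ 2 + (t2 + s * v2) ^ 2.

Lemma base_sq_pos (s : R) : 0 < base_sq s.
Proof.
  unfold base_sq; pose proof (pow2_ge_0 (z1 + s * u1)); pose proof (pow2_ge_0 (z2 + s * u2)); lra.
Qed.

Lemma Derive2_base_fibre :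
  Derive_n (fun s => base_sq s * fibre_sq s) 2 0 =
  2 * (u1 ^ 2 + u2 ^ 2) * (t1 ^ 2 + t2 ^ 2)
  + 8 * (u1 * z1 + u2 * z2) * (v1 * t1 + v2 * t2)
  + 2 * (1 + z1 ^ 2 + z2 ^ 2) * (v1 ^ 2 + v2 ^ 2).
Proof.
  rewrite (Derive_n_2_of_is_derive _
    (fun s => (2 * u1 * (z1 + s * u1) + 2 * u2 * (z2 + s * u2)) * fibre_sq s
              + base_sq s * (2 * v1 * (t1 + s * v1) + 2 * v2 * (t2 + s * v2)))
    (fun s => 2 * (u1 ^ 2 + u2 ^ 2) * fibre_sq s
              + 2 * (2 * u1 * (z1 + s * u1) + 2 * u2 * (z2 + s * u2))
                  * (2 * v1 * (t1 + s * v1) + 2 * v2 * (t2 + s * v2))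
              + base_sq s * (2 * (v1 ^ 2 + v2 ^ 2)))).
  - unfold base_sq, fibre_sq; ring.
  - intros s; unfold base_sq, fibre_sq; auto_derive; auto; ring.
  - intros s; unfold base_sq, fibre_sq; auto_derive; auto; ring.
Qed.

Lemma Derive2_ln_base_plus_base_fibre :
  Derive_n (fun s => ln (base_sq s) + K * (base_sq s * fibre_sq s)) 2 0 =
  (2 * (u1 ^ 2 + u2 ^ 2) * (1 + z1 ^ 2 + z2 ^ 2) - 4 * (u1 * z1 + u2 * z2) ^ 2)
    / (1 + z1 ^ 2 + z2 ^ 2) ^ 2
  + K * Derive_n (fun s => base_sq s * fibre_sq s) 2 0.
Proof.
  rewrite Derive2_base_fibre.
  set (A1 s := 2 * u1 * (z1 + s * u1) + 2 * u2 * (z2 + s * u2)).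
  set (B1 s := 2 * v1 * (t1 + s * v1) + 2 * v2 * (t2 + s * v2)).
  rewrite (Derive_n_2_of_is_derive _
    (fun s => A1 s / base_sq s + K * (A1 s * fibre_sq s + base_sq s * B1 s))
    (fun s => (2 * (u1 ^ 2 + u2 ^ 2) * base_sq s - A1 s ^ 2) / base_sq s ^ 2
              + K * (2 * (u1 ^ 2 + u2 ^ 2) * fibre_sq s + 2 * A1 s * B1 s
                     + base_sq s * (2 * (v1 ^ 2 + v2 ^ 2))))).
  - unfold A1, B1, base_sq, fibre_sq; field; nra.
  - intros s; pose proof (base_sq_pos s); unfold A1, B1, base_sq, fibre_sq in *.
    auto_derive; [lra | field; lra].
  - intros s; pose proof (base_sq_pos s); unfold A1, B1, base_sq, fibre_sq in *.
    auto_derive; [lra | field; lra].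
Qed.

End SecondDerivativesAlongLine.

(* [tau] and [omega_FS] restricted to [L_w], at [(z, t)] on [(u, v)], normalized as [ddc]. *)
Definition tau_form (z t u v : C) : R := 4 * (nsq v + nsq (u * t + z * v)%C).
Definition fs_form (z u : C) : R := 4 * nsq u / (1 + nsq z) ^ 2.

Lemma tau_form_ge0 (z t u v : C) : 0 <= tau_form z t u v.
Proof. unfold tau_form; pose proof (nsq_ge0 v); pose proof (nsq_ge0 (u * t + z * v)%C); lra. Qed.

Lemma fs_form_ge0 (z u : C) : 0 <= fs_form z u.
Proof.
  unfold fs_form; apply Rdiv_le_0_compat; pose proof (nsq_ge0 u); pose proof (nsq_ge0 z); nra.
Qed.

Lemma ddc_restrL_e_rho1 (w z t u v : C) :
  ddc (restrL w e_rho1) z t u v = tau_form z t u v.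
Proof.
  destruct w as [w1 w2], z as [z1 z2], t as [t1 t2], u as [u1 u2], v as [v1 v2].
  transitivity
    (Derive_n (fun s => base_sq z1 z2 u1 u2 s * fibre_sq t1 t2 v1 v2 s) 2 0
     + Derive_n (fun s => base_sq z1 z2 (- u2) u1 s * fibre_sq t1 t2 (- v2) v1 s) 2 0).
  { unfold ddc; f_equal; apply Derive_n_ext; intros s;
      unfold restrL, e_rho1, nsq, base_sq, fibre_sq; simpl; ring. }
  rewrite !Derive2_base_fibre; unfold tau_form, nsq; simpl; ring.
Qed.

Lemma ddc_restrL_pot_hat (w z t u v : C) :
  ddc (restrL w pot_hat) z t u v
  = fs_form z u + (1 + nsq w) * tau_form z t u v.
Proof.
  destruct w as [w1 w2], z as [z1 z2], t as [t1 t2], u as [u1 u2], v as [v1 v2].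
  set (K := 1 + nsq (w1, w2)).
  transitivity
    (Derive_n (fun s => ln (base_sq z1 z2 u1 u2 s)
                        + K * (base_sq z1 z2 u1 u2 s * fibre_sq t1 t2 v1 v2 s)) 2 0
     + Derive_n (fun s => ln (base_sq z1 z2 (- u2) u1 s)
                  + K * (base_sq z1 z2 (- u2) u1 s * fibre_sq t1 t2 (- v2) v1 s)) 2 0).
  { unfold ddc; f_equal; apply Derive_n_ext; intros s;
      unfold K, restrL, pot_hat, pot_FS, e_rho, nsq, base_sq, fibre_sq; simpl;
      (f_equal; [f_equal; ring | ring]). }
  rewrite !Derive2_ln_base_plus_base_fibre, !Derive2_base_fibre.
  assert (0 < 1 + z1 ^ 2 + z2 ^ 2) by nra.
  unfold fs_form, tau_form, nsq; simpl; field; lra.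
Qed.

Lemma fs_form_le_tau_form (z t u v : C) :
  t <> RtoC 0 -> fs_form z u <= tau_form z t u v / ((1 + nsq z) * nsq t).
Proof.
  intros Ht; unfold fs_form, tau_form.
  pose proof (nsq_ge0 z); pose proof (nsq_pos t Ht).
  pose proof (nsq_add_mul_le 1 (- z) (u * t + z * v) v) as CS.
  replace (1 * (u * t + z * v) + - z * v)%C with (u * t)%C in CS
    by (destruct z, t, u, v; apply injective_projections; simpl; ring).
  replace (nsq 1 + nsq (- z)) with (1 + nsq z) in CS
    by (destruct z; unfold nsq, RtoC; simpl; ring).
  rewrite nsq_mul in CS.
  apply (Rmult_le_reg_l ((1 + nsq z) ^ 2 * nsq t));
    [apply Rmult_lt_0_compat; [apply pow_lt |]; lra |].
  replace ((1 + nsq z) ^ 2 * nsq t * (4 * nsq u / (1 + nsq z) ^ 2)) with (4 * (nsq u * nsq t))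
    by (field; lra).
  replace ((1 + nsq z) ^ 2 * nsq t * (4 * (nsq v + nsq (u * t + z * v)%C) / ((1 + nsq z) * nsq t)))
    with (4 * ((1 + nsq z) * (nsq v + nsq (u * t + z * v)%C))) by (field; lra).
  lra.
Qed.

Lemma e_rho_restrL (w z t : C) :
  e_rho z t (w * t)%C = (1 + nsq w) * e_rho1 z t (w * t)%C.
Proof. unfold e_rho, e_rho1; rewrite nsq_mul; ring. Qed.

Theorem lemma3p4 (w z t : C) (HOmega : e_rho z t (w * t)%C < 1) :
  (forall u v : C,
     ddc (restrL w e_rho1) z t u v <= ddc (restrL w pot_hat) z t u v) /\
  (t <> RtoC 0 ->
   forall u v : C,
     ddc (restrL w pot_hat) z t u v
     <= 2 / e_rho1 z t (w * t)%C * ddc (restrL w e_rho1) z t u v).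
Proof.
  rewrite e_rho_restrL in HOmega.
  change (e_rho1 z t (w * t)%C) with ((1 + nsq z) * nsq t) in *.
  assert (HK : 1 <= 1 + nsq w) by (pose proof (nsq_ge0 w); lra).
  set (e := (1 + nsq z) * nsq t) in *.
  split; [intros u v | intros Ht u v];
    rewrite ddc_restrL_pot_hat, ddc_restrL_e_rho1;
    pose proof (tau_form_ge0 z t u v); pose proof (fs_form_ge0 z u).
  - nra.
  - assert (He : 0 < e) by (pose proof (nsq_ge0 z); pose proof (nsq_pos t Ht); unfold e; nra).
    assert (HKe : 1 + nsq w <= / e).
    { apply (Rmult_le_reg_r e); [lra |]; rewrite Rinv_l; lra. }
    replace (2 / e * tau_form z t u v) with (tau_form z t u v / e + / e * tau_form z t u v)
      by (field; lra).
    apply Rplus_le_compat; [now apply fs_form_le_tau_form |].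
    apply Rmult_le_compat_r; lra.
Qed.
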